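(* Let $\lambda\in\mathbb Q\cup\{\infty\}$, $i\in\{1,2,3,6\}$ and $\ell\in\mathbb Z_{>0}$. Then: (a) if $d\in R^\lambda_\ell(i)$ then $R^\lambda_\ell(i)=\{\Phi^j(d)\mid j=1,\ldots,i\}$; (b) if $i>1$ and $i\mid\ell$ then $R^\lambda_\ell(i)=\emptyset$; (c) if $i>1$ and $i\nmid\ell$ then $R^\lambda_\ell(i)$ consists of exactly $i$ real roots; (d) $R^\lambda_\ell(1)=\{h_{a,b}\}$, where $a\in\mathbb N$, $b\in\mathbb Z$ satisfy $b/a=\lambda$ and $\gcd(a,b)=\ell$ (for $\lambda=\infty$: $a=0$, $b=\ell$).
   Context: Let $V=\{1_1,1_2,2_1,2_2,3_0,3_1,4_0,4_1,5_{-1},5_0\}$ and identify $\mathbb Z^{10}=\mathbb Z^V$. Let $A$ be the set of 12 arrows $2_2\to1_2$, $1_2\to2_1$, $3_1\to2_1$, $2_2\to3_1$, $4_1\to3_1$, $3_1\to4_0$, $5_0\to4_0$, $4_1\to5_0$, $2_1\to1_1$, $2_1\to3_0$, $4_0\to3_0$, $4_0\to5_{-1}$, and let $P=\{(2_2,2_1),(4_1,4_0),(1_2,1_1),(3_1,3_0),(5_0,5_{-1})\}$. The Ringel form (of the tubular algebra $\Delta$ of type $(6,3,2)$) is $\langle d,e\rangle=\sum_{v\in V}d_ve_v-\sum_{(v\to w)\in A}d_ve_w+\sum_{(v,w)\in P}d_ve_w$. Write $\langle d,e\rangle=d^{t}Ee$ and let $\Phi=-E^{-1}E^{t}$ (Coxeter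 matrix; $\Phi$ is integral with $\Phi^6=\mathrm{id}$). Let $q(d)=\langle d,d\rangle$ and $R=\{d\in\mathbb Z^{10}\setminus\{0\}: q(d)\in\{0,1\}\}$; $d\in R$ is real if $q(d)=1$, imaginary if $q(d)=0$. Let $h_0$ have entries $h_0(1_1,1_2,2_1,2_2,3_0,3_1,4_0,4_1,5_{-1},5_0)=(1,1,3,0,2,2,3,0,1,1)$ and $h_\infty$ entries $(0,1,1,1,0,2,1,1,0,1)$ in the same order; put $h_{a,b}=ah_0+bh_\infty$. $R^+=\{d\in R: \langle d,h_\infty\rangle>0\text{ or }(\langle d,h_\infty\rangle=0\text{ and }\langle h_0,d\rangle>0)\}$. For $d\in R^+$ its slope is $\langle h_0,d\rangle/\langle d,h_\infty\rangle\in\mathbb Q\cup\{\infty\}$ and $R^\lambda$ is the set of positive roots of slope $\lambda$. The rank $\operatorname{rk}(d)$ is the least $m\ge1$ with $\Phi^m(d)=d$; $h(d)=\sum_{j=1}^{\operatorname{rk}(d)}\Phi^j(d)$; the quasi-length $\operatorname{ql}(d)$ is the gcd of the entries of $h(d)$. $R^\lambda_\ell(i)=\{d\in R^\lambda:\operatorname{rk}(d)=i,\ \operatorname{ql}(d)=\ell\}$. *)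

From HB Require Import structures.
From mathcomp Require Import all_boot all_order all_algebra.
Set Implicit Arguments. Unset Strict Implicit. Unset Printing Implicit Defensive.
Import Order.TTheory GRing.Theory Num.Theory.
Local Open Scope ring_scope.

(* Vertex order (indices 0..9):
   1_1,1_2,2_1,2_2,3_0,3_1,4_0,4_1,5_{-1},5_0 *)

Definition arrows : seq (nat * nat) :=
  [:: (3,1); (1,2); (5,2); (3,5); (7,5); (5,6); (9,6); (7,9);
      (2,0); (2,4); (6,4); (6,8)]%N.

Definition Ppairs : seq (nat * nat) :=
  [:: (3,2); (7,6); (1,0); (5,4); (9,8)]%N.

Definition Eentry (i j : nat) : int :=
  (i == j)%:Z - (count (pred1 (i, j)) arrows)%:Z + (count (pred1 (i, j)) Ppairs)%:Z.

(* Ringel form matrix: <d,e> = d^t E e *)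
Definition Emx : 'M[int]_10 := \matrix_(i < 10, j < 10) Eentry i j.

Definition EmxQ : 'M[rat]_10 := map_mx (fun z : int => z%:~R) Emx.

(* Coxeter matrix Phi = - E^{-1} E^t, computed over Q; it is integral, so
   we read off its (integer) numerators. *)
Definition PhiQ : 'M[rat]_10 := - (invmx EmxQ *m EmxQ^T).
Definition Phi : 'M[int]_10 := map_mx (fun q : rat => numq q) PhiQ.

Notation vec := 'cV[int]_10.

Definition form (d e : vec) : int := (d^T *m Emx *m e) 0 0.
Definition qform (d : vec) : int := form d d.

Definition vec_of (s : seq int) : vec := \col_(i < 10) nth 0 s i.
Definition h_zero : vec := vec_of [:: 1; 1; 3; 0; 2; 2; 3; 0; 1; 1].
Definition h_infty : vec := vec_of [:: 0; 1; 1; 1; 0; 2; 1; 1; 0; 1].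
Definition hab (a : nat) (b : int) : vec := a%:Z *: h_zero + b *: h_infty.

Definition isRoot (d : vec) : bool := (d != 0) && ((qform d == 0) || (qform d == 1)).
Definition isReal (d : vec) : bool := isRoot d && (qform d == 1).

Definition isPosRoot (d : vec) : bool :=
  isRoot d && ((0 < form d h_infty) || ((form d h_infty == 0) && (0 < form h_zero d))).

(* slope in Q \cup {oo}; None stands for oo *)
Definition slope (d : vec) : option rat :=
  if form d h_infty == 0 then None
  else Some ((form h_zero d)%:~R / (form d h_infty)%:~R).

Definition PhiPow (j : nat) (d : vec) : vec := (Phi ^+ j) *m d.

Definition isRank (d : vec) (m : nat) : bool :=
  [&& (0 < m)%N, PhiPow m d == d &
      [forall k : 'I_m, (0 < k)%N ==> (PhiPow k d != d)]].

Definition hvec (d : vec) (m : nat) : vec := \sum_(1 <= j < m.+1) PhiPow j d.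

Definition qlen (d : vec) (m : nat) : int := \big[gcdz/0]_(k < 10) hvec d m k 0.

Definition inR (lam : option rat) (l i : nat) (d : vec) : Prop :=
  isPosRoot d /\ slope d = lam /\ isRank d i /\ qlen d i = l%:Z.

From Stdlib Require Import BinInt.
From Pilot Require Import Defs.
From HB Require Import structures.
From mathcomp Require Import all_boot all_order all_algebra.
From mathcomp Require Import zify ring lra ssrZ.
Set Implicit Arguments.
Unset Strict Implicit.
Unset Printing Implicit Defensive.
Import Order.TTheory GRing.Theory Num.Theory.
Local Open Scope ring_scope.

Definition dotL (s t : seq int) : int :=
  foldr (fun k acc => s`_k * t`_k + acc) 0 (iota 0 10).
Definition mulL (A : seq (seq int)) (t : seq int) : seq int := [seq dotL r t | r <- A].
Definition tab (f : nat -> nat -> int) : seq (seq int) := mkseq (fun i => mkseq (f i) 10) 10.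
Definition mmulL (A B : seq (seq int)) : seq (seq int) :=
  tab (fun i j => foldr (fun k acc => (nth [::] A i)`_k * (nth [::] B k)`_j + acc) 0 (iota 0 10)).
Definition mat_of (A : seq (seq int)) : 'M[int]_10 := \matrix_(i, j) (nth [::] A i)`_j.
Definition coords (d : vec) : seq int := mkseq (fun k => d (inord k) 0) 10.

Lemma sum_ord10 (f : nat -> int) : \sum_(k < 10) f k = foldr (fun k acc => f k + acc) 0 (iota 0 10).
Proof. by rewrite !big_ord_recl big_ord0. Qed.

Lemma coordsK : cancel coords (vec_of).
Proof. by move=> d; apply/matrixP => i j; rewrite mxE (ord1 j) nth_mkseq // inord_val. Qed.

Lemma size_coords d : size (coords d) = 10%N.
Proof. exact: size_mkseq. Qed.

Lemma vec_of_inj s t : size s = 10%N -> size t = 10%N -> vec_of s = vec_of t -> s = t.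
Proof.
move=> Hs Ht E; apply: (@eq_from_nth _ 0) => [|k]; first by rewrite Hs Ht.
by rewrite Hs => lt_k; have := congr1 (fun d : vec => d (Ordinal lt_k) 0) E; rewrite !mxE.
Qed.

Lemma mat_of_tab f : mat_of (tab f) = \matrix_(i < 10, j < 10) f i j.
Proof. by apply/matrixP => i j; rewrite !mxE !nth_mkseq. Qed.

Lemma mulmx_vec_of A t : size A = 10%N -> mat_of A *m vec_of t = vec_of (mulL A t).
Proof.
move=> sizeA; apply/matrixP => i j; rewrite !mxE (nth_map [::]) ?sizeA //.
rewrite (eq_bigr (fun k : 'I_10 => (nth [::] A i)`_k * t`_k)) => [|k _]; last by rewrite !mxE.
exact: (sum_ord10 (fun k => (nth [::] A i)`_k * t`_k)).
Qed.

Lemma mulmx_mat_of A B : mat_of A *m mat_of B = mat_of (mmulL A B).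
Proof.
rewrite mat_of_tab; apply/matrixP => i j; rewrite !mxE.
rewrite (eq_bigr (fun k : 'I_10 => (nth [::] A i)`_k * (nth [::] B k)`_j)) => [|k _]; last by rewrite !mxE.
exact: (sum_ord10 (fun k => (nth [::] A i)`_k * (nth [::] B k)`_j)).
Qed.

Lemma Emx_tab : Emx = mat_of (tab Eentry).
Proof. by rewrite mat_of_tab. Qed.

Lemma form_vec_of s t : Defs.form (vec_of s) (vec_of t) = dotL s (mulL (tab Eentry) t).
Proof.
rewrite /Defs.form -mulmxA Emx_tab mulmx_vec_of ?size_mkseq // mxE.
rewrite (eq_bigr (fun k : 'I_10 => s`_k * (mulL (tab Eentry) t)`_k)) => [|k _]; last by rewrite !mxE.
exact: (sum_ord10 (fun k => s`_k * (mulL (tab Eentry) t)`_k)).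
Qed.

Definition Plist : seq (seq int) := [:: [:: -1; -1; 1; 0; 0; 0; 0; 0; 0; 0];
  [:: 0; 0; 0; 0; -1; 0; 1; 0; 0; 0];
  [:: -1; 0; 1; -1; -1; 0; 1; 0; 0; 0];
  [:: 0; 0; 0; 0; -1; 0; 1; 0; -1; 0];
  [:: 0; 0; 1; 0; -1; -1; 1; 0; 0; 0];
  [:: -1; 0; 1; 0; -1; 0; 1; 0; -1; 0];
  [:: 0; 0; 1; 0; -1; 0; 1; -1; -1; 0];
  [:: -1; 0; 1; 0; -1; 0; 0; 0; 0; 0];
  [:: 0; 0; 0; 0; 0; 0; 1; 0; -1; -1];
  [:: 0; 0; 1; 0; -1; 0; 0; 0; 0; 0]].

Definition Einv_list : seq (seq int) := [:: [:: 1; 0; 0; 0; 0; 0; 0; 0; 0; 0];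
  [:: 0; 1; 1; 0; 1; 0; 0; 0; 0; 0];
  [:: 1; 0; 1; 0; 1; 0; 0; 0; 0; 0];
  [:: 0; 1; 1; 1; 1; 1; 1; 0; 1; 0];
  [:: 0; 0; 0; 0; 1; 0; 0; 0; 0; 0];
  [:: 1; 0; 1; 0; 1; 1; 1; 0; 1; 0];
  [:: 0; 0; 0; 0; 1; 0; 1; 0; 1; 0];
  [:: 1; 0; 1; 0; 1; 1; 1; 1; 0; 1];
  [:: 0; 0; 0; 0; 0; 0; 0; 0; 1; 0];
  [:: 0; 0; 0; 0; 1; 0; 1; 0; 0; 1]].

Lemma Emx_mulEinv : Emx *m mat_of Einv_list = 1%:M.
Proof.
rewrite Emx_tab mulmx_mat_of (_ : mmulL _ _ = tab (fun i j => (i == j)%:R)); last by vm_compute.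
by rewrite mat_of_tab; apply/matrixP => i j; rewrite !mxE.
Qed.

Lemma Emx_mulPlist : Emx *m mat_of Plist = - Emx^T.
Proof.
rewrite Emx_tab mulmx_mat_of (_ : mmulL _ _ = tab (fun i j => - Eentry j i)); last by vm_compute.
by rewrite !mat_of_tab; apply/matrixP => i j; rewrite !mxE.
Qed.

Lemma Phi_Plist : Phi = mat_of Plist.
Proof.
have unitE : EmxQ \in unitmx.
  have := congr1 (map_mx (fun z : int => z%:~R : rat)) Emx_mulEinv.
  by rewrite map_mxM map_mx1 => /mulmx1_unit [].
have EmxQT : EmxQ^T = - (EmxQ *m map_mx (fun z : int => z%:~R) (mat_of Plist)).
  by rewrite /EmxQ -map_mxM Emx_mulPlist map_mxN map_trmx opprK.
have : PhiQ = map_mx (fun z : int => z%:~R) (mat_of Plist).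
  by rewrite /PhiQ EmxQT mulmxN opprK mulmxA mulVmx // mul1mx.
by move=> PhiQE; apply/matrixP => i j; rewrite /Phi mxE PhiQE mxE numq_int.
Qed.

Lemma Phi_order6 : Phi ^+ 6 = 1.
Proof.
have powE n : mat_of Plist ^+ n = mat_of (iter n (mmulL Plist) (tab (fun i j => (i == j)%:R))).
  elim: n => [|n IHn]; last by rewrite exprS -mulmxE IHn mulmx_mat_of.
  by rewrite expr0 mat_of_tab; apply/matrixP => i j; rewrite !mxE.
rewrite Phi_Plist powE (_ : iter _ _ _ = tab (fun i j => (i == j)%:R)); last by vm_compute.
by rewrite mat_of_tab; apply/matrixP => i j; rewrite !mxE.
Qed.

Lemma Phi_h_zero : Phi *m h_zero = h_zero.
Proof. by rewrite Phi_Plist mulmx_vec_of //; congr vec_of; vm_compute. Qed.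

Lemma Phi_h_infty : Phi *m h_infty = h_infty.
Proof. by rewrite Phi_Plist mulmx_vec_of //; congr vec_of; vm_compute. Qed.

Lemma form_h_zero_infty : Defs.form h_zero h_infty = 6.
Proof. by rewrite form_vec_of; vm_compute. Qed.

Local Notation form := Defs.form.

Lemma formDl d1 d2 e : form (d1 + d2) e = form d1 e + form d2 e.
Proof. by rewrite /form linearD !mulmxDl mxE. Qed.

Lemma formDr d e1 e2 : form d (e1 + e2) = form d e1 + form d e2.
Proof. by rewrite /form mulmxDr mxE. Qed.

Lemma formZl a d e : form (a *: d) e = a * form d e.
Proof. by rewrite /form linearZ /= -!scalemxAl mxE. Qed.

Lemma formZr a d e : form d (a *: e) = a * form d e.
Proof. by rewrite /form -scalemxAr mxE. Qed.

Lemma form0l e : form 0 e = 0.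
Proof. by rewrite /form trmx0 !mul0mx mxE. Qed.

Lemma form0r d : form d 0 = 0.
Proof. by rewrite /form mulmx0 mxE. Qed.

Lemma form_suml (I : Type) (r : seq I) (P : pred I) (F : I -> vec) e :
  form (\sum_(i <- r | P i) F i) e = \sum_(i <- r | P i) form (F i) e.
Proof. exact: (big_morph (form^~ e) (fun x y => formDl x y e) (form0l e)). Qed.

Lemma form_sumr (I : Type) (r : seq I) (P : pred I) (F : I -> vec) d :
  form d (\sum_(i <- r | P i) F i) = \sum_(i <- r | P i) form d (F i).
Proof. exact: (big_morph (form d) (formDr d) (form0r d)). Qed.

Lemma form_trmx d e : (d^T *m Emx^T *m e) 0 0 = form e d.
Proof.
have -> : d^T *m Emx^T *m e = (e^T *m Emx *m d)^T by rewrite !trmx_mul trmxK mulmxA.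
by rewrite mxE.
Qed.

Lemma Emx_mulPhi : Emx *m Phi = - Emx^T.
Proof. by rewrite Phi_Plist Emx_mulPlist. Qed.

Lemma Phi_isometry_mx : Phi^T *m Emx *m Phi = Emx.
Proof. by rewrite -mulmxA Emx_mulPhi mulmxN -trmx_mul Emx_mulPhi raddfN /= trmxK opprK. Qed.

Lemma form_Phi d e : form (Phi *m d) (Phi *m e) = form d e.
Proof. by rewrite /form trmx_mul -[in RHS]Phi_isometry_mx !mulmxA. Qed.

Lemma form_fixedr d h : Phi *m h = h -> form d h = - form h d.
Proof.
move=> fix_h; rewrite -[in RHS]form_trmx /form -{1}fix_h mulmxA -(mulmxA _ Emx).
by rewrite Emx_mulPhi mulmxN mulNmx mxE.
Qed.

Lemma qform_fixed h : Phi *m h = h -> qform h = 0.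
Proof. by move=> fix_h; have := form_fixedr h fix_h; rewrite /qform; lia. Qed.

Lemma qform_add_fixed d h : Phi *m h = h -> qform (d + h) = qform d.
Proof.
move=> fix_h; rewrite /qform !formDl !formDr (form_fixedr d fix_h) -/(qform h) qform_fixed // -/(qform d).
by rewrite addr0; ring.
Qed.

Lemma PhiPow0 d : PhiPow 0 d = d.
Proof. by rewrite /PhiPow expr0 mul1mx. Qed.

Lemma PhiPowS j d : PhiPow j.+1 d = Phi *m PhiPow j d.
Proof. by rewrite /PhiPow exprS -mulmxE mulmxA. Qed.

Lemma PhiPowSr j d : PhiPow j.+1 d = PhiPow j (Phi *m d).
Proof. by rewrite /PhiPow exprSr -mulmxE mulmxA. Qed.

Lemma PhiPow_add j d e : PhiPow j (d + e) = PhiPow j d + PhiPow j e.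
Proof. exact: mulmxDr. Qed.

Lemma PhiPowD m n d : PhiPow (m + n) d = PhiPow m (PhiPow n d).
Proof. by rewrite /PhiPow exprD -mulmxE mulmxA. Qed.

Lemma PhiPow_fixed j h : Phi *m h = h -> PhiPow j h = h.
Proof. by move=> fix_h; elim: j => [|j IHj]; rewrite ?PhiPow0 // PhiPowS IHj. Qed.

Lemma form_PhiPow j d e : form (PhiPow j d) (PhiPow j e) = form d e.
Proof. by elim: j => [|j IHj]; rewrite ?PhiPow0 // !PhiPowS form_Phi. Qed.

Lemma PhiPow_order6 d : PhiPow 6 d = d.
Proof. by rewrite /PhiPow Phi_order6 mul1mx. Qed.

Lemma Phi_inj : injective (mulmx Phi : vec -> vec).
Proof. by move=> d e Ed; rewrite -(PhiPow_order6 d) -(PhiPow_order6 e) !PhiPowSr Ed. Qed.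

Lemma isRank_uniq d m n : isRank d m -> isRank d n -> m = n.
Proof.
have rank_le p q : isRank d p -> isRank d q -> (q <= p)%N.
  move=> /and3P[p_gt0 /eqP Pp _] /and3P[_ _ /forallP Hq]; rewrite leqNgt.
  by apply/negP => lt_pq; have := Hq (Ordinal lt_pq); rewrite /= p_gt0 Pp eqxx.
by move=> rm rn; apply/eqP; rewrite eqn_leq !rank_le.
Qed.

Lemma isRank_eq d e m :
  (forall k, (PhiPow k e == e) = (PhiPow k d == d)) -> isRank e m = isRank d m.
Proof.
move=> eq_fix; rewrite /isRank eq_fix; congr [&& _, _ & _].
by apply: eq_forallb => k; rewrite eq_fix.
Qed.

Lemma isRank_add_fixed d h m : Phi *m h = h -> isRank (d + h) m = isRank d m.
Proof.
move=> fix_h; apply: isRank_eq => k.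
by rewrite PhiPow_add (PhiPow_fixed _ fix_h) -subr_eq0 opprD addrACA subrr addr0 subr_eq0.
Qed.

Lemma isRank_Phi d m : isRank (Phi *m d) m = isRank d m.
Proof. by apply: isRank_eq => k; rewrite -PhiPowSr PhiPowS (inj_eq Phi_inj). Qed.

Lemma hvec_add_fixed d h m : Phi *m h = h -> hvec (d + h) m = hvec d m + h *+ m.
Proof.
move=> fix_h; rewrite /hvec; under eq_bigr do rewrite PhiPow_add (PhiPow_fixed _ fix_h).
by rewrite big_split sumr_const_nat subn1.
Qed.

Lemma mulmx_hvec d m : Phi *m hvec d m = hvec (Phi *m d) m.
Proof. by rewrite mulmx_sumr; apply: eq_bigr => j _; rewrite -PhiPowS PhiPowSr. Qed.

Lemma hvec_Phi d m : PhiPow m d = d -> hvec (Phi *m d) m = hvec d m.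
Proof.
rewrite /hvec; case: m => [|m] Pm; first by rewrite !big_geq.
under eq_bigr do rewrite -PhiPowSr.
rewrite big_nat_recr //= [RHS]big_nat_recl // addrC.
by rewrite (PhiPowS m.+1) Pm PhiPowS PhiPow0.
Qed.

Lemma form_hvecl d h m : Phi *m h = h -> form (hvec d m) h = m%:Z * form d h.
Proof.
move=> fix_h; rewrite /hvec form_suml.
under eq_bigr => j _ do rewrite -[h in form _ h](PhiPow_fixed j fix_h) form_PhiPow.
by rewrite sumr_const_nat subn1 -mulr_natl natz.
Qed.

Lemma form_hvecr d h m : Phi *m h = h -> form h (hvec d m) = m%:Z * form h d.
Proof.
move=> fix_h; rewrite /hvec form_sumr.
under eq_bigr => j _ do rewrite -[h in form h _](PhiPow_fixed j fix_h) form_PhiPow.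
by rewrite sumr_const_nat subn1 -mulr_natl natz.
Qed.

Definition qcore {R : pzRingType} (y : seq R) : R :=
  if y is [:: _; y1; y2; _; y4; y5; y6; y7; y8; y9] then
    y1 * (y1 - y2) + y2 * (y2 - y4 - y5) + y4 * (y4 + y5 - y6) + y5 * (y5 - y6 - y7)
    + y6 * (y6 + y7 - y8 - y9) + y7 * (y7 - y9) + y8 * (y8 + y9) + y9 * y9
  else 0.

Definition core_sq_bounds : seq nat := [:: 0; 4; 12; 0; 8; 8; 16; 4; 4; 4]%N.

Lemma core_coord_sq_le {R : realDomainType} (y : seq R) (k : nat) :
  size y = 10%N -> y`_0 = 0 -> y`_3 = 0 ->
  y`_k ^+ 2 <= (nth 0 core_sq_bounds k)%:R * qcore y.
Proof.
case: y => [|y0 [|y1 [|y2 [|y3 [|y4 [|y5 [|y6 [|y7 [|y8 [|y9 [|? ?]]]]]]]]]]] //= _ -> ->.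
rewrite /core_sq_bounds; case: k => [|[|[|[|[|[|[|[|[|[|k]]]]]]]]]] /=; try lra.
- have := sqr_ge0 (3 * y1 - 2 * y2); have := sqr_ge0 (4 * y2 - 3 * y4 - 3 * y5); have := sqr_ge0 (5 * y4 + y5 - 4 * y6);
  have := sqr_ge0 (6 * y5 - 4 * y6 - 5 * y7); have := sqr_ge0 (2 * y6 + y7 - 3 * y8 - 3 * y9); have := sqr_ge0 (2 * y7 + y8 - y9); have := sqr_ge0 (y8 - y9); lra.
- have := sqr_ge0 (2 * y1 - y2); have := sqr_ge0 (4 * y2 - 3 * y4 - 3 * y5); have := sqr_ge0 (5 * y4 + y5 - 4 * y6);
  have := sqr_ge0 (6 * y5 - 4 * y6 - 5 * y7); have := sqr_ge0 (2 * y6 + y7 - 3 * y8 - 3 * y9); have := sqr_ge0 (2 * y7 + y8 - y9); have := sqr_ge0 (y8 - y9); lra.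
- have := sqr_ge0 (2 * y1 - y2); have := sqr_ge0 (3 * y2 - 2 * y4 - 2 * y5); have := sqr_ge0 (13 * y4 + 4 * y5 - 12 * y6);
  have := sqr_ge0 (16 * y5 - 9 * y6 - 13 * y7); have := sqr_ge0 (11 * y6 + 7 * y7 - 16 * y8 - 16 * y9); have := sqr_ge0 (10 * y7 + 7 * y8 - 4 * y9); have := sqr_ge0 (y8 - 2 * y9); lra.
- have := sqr_ge0 (2 * y1 - y2); have := sqr_ge0 (3 * y2 - 2 * y4 - 2 * y5); have := sqr_ge0 (4 * y4 + y5 - 3 * y6);
  have := sqr_ge0 (4 * y5 - 3 * y6 - 4 * y7); have := sqr_ge0 (11 * y6 + 4 * y7 - 16 * y8 - 16 * y9); have := sqr_ge0 (10 * y7 + 4 * y8 - 7 * y9); have := sqr_ge0 (2 * y8 - y9); lra.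
- have := sqr_ge0 (2 * y1 - y2); have := sqr_ge0 (3 * y2 - 2 * y4 - 2 * y5); have := sqr_ge0 (4 * y4 + y5 - 3 * y6);
  have := sqr_ge0 (5 * y5 - 3 * y6 - 4 * y7); have := sqr_ge0 (27 * y6 + 16 * y7 - 40 * y8 - 40 * y9); have := sqr_ge0 (26 * y7 + 16 * y8 - 11 * y9); have := sqr_ge0 (2 * y8 - 3 * y9); lra.
- have := sqr_ge0 (2 * y1 - y2); have := sqr_ge0 (3 * y2 - 2 * y4 - 2 * y5); have := sqr_ge0 (4 * y4 + y5 - 3 * y6);
  have := sqr_ge0 (5 * y5 - 3 * y6 - 4 * y7); have := sqr_ge0 (4 * y6 + 2 * y7 - 5 * y8 - 5 * y9); have := sqr_ge0 (y7 + y8 - y9); have := sqr_ge0 (y8 + y9); lra.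
- have := sqr_ge0 (2 * y1 - y2); have := sqr_ge0 (3 * y2 - 2 * y4 - 2 * y5); have := sqr_ge0 (4 * y4 + y5 - 3 * y6);
  have := sqr_ge0 (5 * y5 - 3 * y6 - 4 * y7); have := sqr_ge0 (4 * y6 + 2 * y7 - 5 * y8 - 5 * y9); have := sqr_ge0 (2 * y7 + y8 - y9); have := sqr_ge0 (y9); lra.
- have := sqr_ge0 (2 * y1 - y2); have := sqr_ge0 (3 * y2 - 2 * y4 - 2 * y5); have := sqr_ge0 (4 * y4 + y5 - 3 * y6);
  have := sqr_ge0 (5 * y5 - 3 * y6 - 4 * y7); have := sqr_ge0 (4 * y6 + 2 * y7 - 5 * y8 - 5 * y9); have := sqr_ge0 (2 * y7 + y8 - y9); have := sqr_ge0 (y8); lra.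
- by rewrite !nth_nil; lra.
Qed.

Lemma coordsE d k : (k < 10)%N -> (coords d)`_k = d (inord k) 0.
Proof. by move=> lt_k; rewrite nth_mkseq. Qed.

Lemma qform_core_list (s : seq int) : size s = 10%N -> s`_0 = 0 -> s`_3 = 0 ->
  qform (vec_of s) = qcore s.
Proof.
case: s => [|y0 [|y1 [|y2 [|y3 [|y4 [|y5 [|y6 [|y7 [|y8 [|y9 [|? ?]]]]]]]]]]] //= _ -> ->.
by rewrite /qform form_vec_of /mulL /dotL /tab /mkseq /Eentry /=; ring.
Qed.

Lemma qcore_eq0 {R : realDomainType} (y : seq R) k :
  size y = 10%N -> y`_0 = 0 -> y`_3 = 0 -> qcore y = 0 -> y`_k = 0.
Proof.
move=> size_y y0 y3 q0; have := core_coord_sq_le k size_y y0 y3.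
by rewrite q0 mulr0 => sq_le0; apply/eqP; rewrite -sqrf_eq0 eq_le sq_le0 sqr_ge0.
Qed.

Definition h_comb (X Y : int) : vec := X *: h_zero + Y *: h_infty.

Definition core (d : vec) : vec := d - h_comb (coords d)`_0 (coords d)`_3.

Lemma Phi_h_comb X Y : Phi *m h_comb X Y = h_comb X Y.
Proof. by rewrite mulmxDr -!scalemxAr Phi_h_zero Phi_h_infty. Qed.

Lemma coords_core d : (coords (core d))`_0 = 0 /\ (coords (core d))`_3 = 0.
Proof. by rewrite !coordsE // !mxE !inordK //=; split; ring. Qed.

Lemma qform_core d : qform (core d) = qform d.
Proof. by rewrite qform_add_fixed // -scaleN1r -scalemxAr Phi_h_comb. Qed.

Lemma core_fixed_eq0 v : Phi *m v = v -> core v = 0.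
Proof.
move=> fix_v; have [c0 c3] := coords_core v.
have fix_c : Phi *m core v = core v by rewrite mulmxBr fix_v Phi_h_comb.
have qc : qcore (coords (core v)) = 0.
  by rewrite -qform_core_list ?size_coords // coordsK qform_fixed.
rewrite -[core v]coordsK; apply/matrixP => i j; rewrite !mxE.
by rewrite (qcore_eq0 i (size_coords _) c0 c3 qc).
Qed.

Lemma fixed_span v : Phi *m v = v -> v = h_comb (coords v)`_0 (coords v)`_3.
Proof. by move/core_fixed_eq0/eqP; rewrite subr_eq0 => /eqP. Qed.

Definition pos_pair (F G : int) : bool := (0 < F) || ((F == 0) && (0 < G)).

Definition slope_pair (F G : int) : option rat :=
  if F == 0 then None else Some (G%:~R / F%:~R).

Lemma isPosRootE d : isPosRoot d = isRoot d && pos_pair (form d h_infty) (form h_zero d).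
Proof. by []. Qed.

Lemma slopeE d : slope d = slope_pair (form d h_infty) (form h_zero d).
Proof. by []. Qed.

Lemma pos_pairZ F G c : 0 < c -> pos_pair (c * F) (c * G) = pos_pair F G.
Proof. by move=> c_gt0; rewrite /pos_pair !pmulr_rgt0 // mulf_eq0 gt_eqF. Qed.

Lemma slope_pairZ F G c : 0 < c -> slope_pair (c * F) (c * G) = slope_pair F G.
Proof.
move=> c_gt0; rewrite /slope_pair mulf_eq0 gt_eqF //=; case: eqP => // /eqP F_neq0.
by rewrite !intrM -mulf_div divff ?mul1r // intr_eq0 gt_eqF.
Qed.

Lemma pos_slope_scaled (i : nat) F G X Y : (0 < i)%N ->
  i%:Z * F = 6 * X -> i%:Z * G = 6 * Y ->
  pos_pair F G = pos_pair X Y /\ slope_pair F G = slope_pair X Y.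
Proof.
move=> i_gt0 EX EY; have i_pos : 0 < i%:Z by rewrite ltz_nat.
by rewrite -(pos_pairZ F G i_pos) -(slope_pairZ F G i_pos) EX EY pos_pairZ ?slope_pairZ.
Qed.

Lemma dvdz_anti (a b : int) : 0 <= a -> 0 <= b -> (a %| b)%Z -> (b %| a)%Z -> a = b.
Proof.
case: a b => [a|a] [b|b] // _ _; rewrite !dvdzE /= => dvd_ab dvd_ba.
by congr Posz; apply/eqP; rewrite eqn_dvd dvd_ab dvd_ba.
Qed.

Lemma gcd_entries_h_comb X Y : \big[gcdz/0]_(k < 10) h_comb X Y k 0 = gcdz X Y.
Proof.
rewrite !big_ord_recl big_ord0 !mxE /=.
have dvd_comb c c' : (gcdz X Y %| X * c + Y * c')%Z.
  by rewrite rpredD // dvdz_mulr // (dvdz_gcdl, dvdz_gcdr).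
apply: dvdz_anti => //; last by rewrite !dvdz_gcd !dvd_comb dvdz0.
rewrite dvdz_gcd; apply/andP; split.
  by apply: dvdz_trans (dvdz_gcdl _ _) _; rewrite mulr1 mulr0 addr0.
do 3 apply: dvdz_trans (dvdz_gcdr _ _) _.
by apply: dvdz_trans (dvdz_gcdl _ _) _; rewrite mulr0 mulr1 add0r.
Qed.

Definition hcoef0 (lam : option rat) (l : nat) : int :=
  if lam is Some q then l%:Z * denq q else 0.
Definition hcoefInf (lam : option rat) (l : nat) : int :=
  if lam is Some q then l%:Z * numq q else l%:Z.
Definition hslope (lam : option rat) (l : nat) : vec := h_comb (hcoef0 lam l) (hcoefInf lam l).

Lemma coprimez_denq_numq q : coprimez (denq q) (numq q).
Proof. by rewrite coprimezE coprime_sym coprime_num_den. Qed.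

Lemma hcoef_spec lam (l : nat) X Y : (0 < l)%N ->
  [/\ pos_pair X Y, slope_pair X Y = lam & gcdz X Y = l%:Z] <->
  X = hcoef0 lam l /\ Y = hcoefInf lam l.
Proof.
move=> l_gt0; split.
- case: lam => [q|] [pos_XY slope_XY gcdXY]; move: slope_XY;
    rewrite /slope_pair /hcoef0 /hcoefInf; last first.
    case: eqP => // X0 _; move: pos_XY gcdXY; rewrite /pos_pair X0 ltxx eqxx gcd0z /=.
    by move=> Y_gt0; rewrite gez0_abs ?ltW.
  case: eqP => // /eqP X_neq0 [q_def].
  have X_gt0 : 0 < X by move: pos_XY; rewrite /pos_pair (negPf X_neq0) orbF.
  have cross : Y * denq q = X * numq q.
    apply: (@intr_inj rat); rewrite !intrM numqE -q_def; field.
    by rewrite intr_eq0.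
  have dvd_X : (denq q %| X)%Z.
    by rewrite -(Gauss_dvdzr X (coprimez_denq_numq q)) mulrC -cross dvdz_mull.
  set t := (X %/ denq q)%Z.
  have EX : X = t * denq q by rewrite divzK.
  have EY : Y = t * numq q by apply: (mulIf (denq_neq0 q)); rewrite cross EX; ring.
  have t_gt0 : 0 < t by move: X_gt0; rewrite EX pmulr_lgt0 // denq_gt0.
  move: gcdXY; rewrite EX EY -mulz_gcdr (eqP (coprimez_denq_numq q)) mulr1.
  by rewrite gez0_abs ?ltW // => <-.
- case: lam => [q|] [-> ->]; rewrite /pos_pair /slope_pair /hcoef0 /hcoefInf; last first.
    by rewrite eqxx ltxx /= gcd0z ltz_nat l_gt0.
  have l_pos : 0 < l%:Z by rewrite ltz_nat.
  rewrite pmulr_rgt0 ?denq_gt0 // mulf_eq0 gt_eqF //= denq_eq0 -mulz_gcdr.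
  rewrite (eqP (coprimez_denq_numq q)) mulr1; split=> //; congr Some.
  by rewrite !intrM -mulf_div divff ?mul1r ?divq_num_den // intr_eq0 gt_eqF.
Qed.

Lemma form_h_comb_infty X Y : form (h_comb X Y) h_infty = 6 * X.
Proof.
rewrite formDl !formZl form_h_zero_infty -/(qform h_infty) qform_fixed ?Phi_h_infty //.
by rewrite mulr0 addr0 mulrC.
Qed.

Lemma form_h_zero_comb X Y : form h_zero (h_comb X Y) = 6 * Y.
Proof.
rewrite formDr !formZr -/(qform h_zero) qform_fixed ?Phi_h_zero // form_h_zero_infty.
by rewrite mulr0 add0r mulrC.
Qed.

Lemma hvec_fixed d i : PhiPow i d = d -> Phi *m hvec d i = hvec d i.
Proof. by move=> Pi; rewrite mulmx_hvec hvec_Phi. Qed.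

Lemma forms_of_hvec d i X Y : hvec d i = h_comb X Y ->
  i%:Z * form d h_infty = 6 * X /\ i%:Z * form h_zero d = 6 * Y.
Proof.
move=> hvE; rewrite -(form_h_comb_infty X Y) -(form_h_zero_comb X Y) -hvE.
by rewrite form_hvecl ?form_hvecr ?Phi_h_infty ?Phi_h_zero.
Qed.

Lemma inR_char lam l i d : (0 < l)%N ->
  inR lam l i d <-> [/\ (qform d == 0) || (qform d == 1), isRank d i & hvec d i = hslope lam l].
Proof.
move=> l_gt0; split.
- case=> /andP[/andP[_ q01] pos] [sl [rk ql]]; split=> //.
  have /and3P[i_gt0 /eqP Pi _] := rk.
  have /fixed_span := hvec_fixed Pi; set X := _`_0; set Y := _`_3 => hvE.
  have [EX EY] := forms_of_hvec hvE.
  have [pos_E sl_E] := pos_slope_scaled i_gt0 EX EY.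
  rewrite hvE /hslope; suff [-> ->] : X = hcoef0 lam l /\ Y = hcoefInf lam l by [].
  apply/(hcoef_spec lam X Y l_gt0); split; first by rewrite -pos_E.
    by rewrite -sl_E.
  by rewrite -ql /qlen hvE gcd_entries_h_comb.
- case=> q01 rk hvE; have /and3P[i_gt0 _ _] := rk.
  have [EX EY] := forms_of_hvec hvE.
  have [pos_E sl_E] := pos_slope_scaled i_gt0 EX EY.
  have [pos_h sl_h gcd_h] := (hcoef_spec lam _ _ l_gt0).2 (conj erefl erefl).
  have d_neq0 : d != 0.
    by apply: contraTneq pos_h => d0; rewrite -pos_E d0 form0l form0r.
  rewrite /inR isPosRootE /isRoot d_neq0 q01 pos_E pos_h slopeE sl_E sl_h.
  by rewrite /qlen hvE gcd_entries_h_comb gcd_h.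
Qed.

Lemma isRank1 d : isRank d 1 = (Phi *m d == d).
Proof.
rewrite /isRank PhiPowS PhiPow0 /=; case: eqP => //= _.
by apply/forallP => k; rewrite ord1.
Qed.

Lemma hvec1 d : hvec d 1 = Phi *m d.
Proof. by rewrite /hvec big_nat1 PhiPowS PhiPow0. Qed.

Lemma inR_rank1 lam l d : (0 < l)%N -> inR lam l 1 d <-> d = hslope lam l.
Proof.
move=> l_gt0; rewrite inR_char // isRank1 hvec1; split=> [[_ /eqP -> //]|->].
have fix_h := Phi_h_comb (hcoef0 lam l) (hcoefInf lam l).
by rewrite /hslope qform_fixed // fix_h eqxx.
Qed.

Lemma inR_Phi lam l i d : (0 < l)%N -> inR lam l i d -> inR lam l i (Phi *m d).
Proof.
move=> l_gt0; rewrite !inR_char // => -[q01 rk hvE].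
have /and3P[_ /eqP Pi _] := rk.
by split; rewrite ?isRank_Phi ?hvec_Phi // /qform form_Phi.
Qed.

Lemma inR_PhiPow lam l i d j : (0 < l)%N -> inR lam l i d -> inR lam l i (PhiPow j d).
Proof.
by move=> l_gt0 Rd; elim: j => [|j IHj]; rewrite ?PhiPow0 // PhiPowS; apply: inR_Phi.
Qed.

Definition rngZ (b : nat) : seq Z := [seq (Z.of_nat k - Z.of_nat b)%Z | k <- iota 0 b.*2.+1].

Fixpoint box_sel (p : pred (seq Z)) (bs : seq nat) (pre : seq Z) : seq (seq Z) :=
  if bs is b :: bs' then flatten [seq box_sel p bs' (rcons pre y) | y <- rngZ b]
  else if p pre then [:: pre] else [::].

Lemma mem_rngZ b y : (Z.abs y <= Z.of_nat b)%Z -> y \in rngZ b.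
Proof.
move=> y_le; apply/mapP; exists (Z.to_nat (y + Z.of_nat b)); last by lia.
by rewrite mem_iota; lia.
Qed.

Lemma mem_box_sel (p : pred (seq Z)) bs pre t : size t = size bs ->
  (forall k, Z.abs t`_k <= Z.of_nat (nth 0%N bs k))%Z -> p (pre ++ t) -> pre ++ t \in box_sel p bs pre.
Proof.
elim: bs pre t => [|b bs IHbs] pre [|y t] // size_t t_le p_t.
  by move: p_t; rewrite /= cats0 => ->; rewrite mem_seq1.
apply/flatten_mapP; exists y; first exact: mem_rngZ (t_le 0%N).
by rewrite -cat_rcons IHbs ?cat_rcons //; [case: size_t | move=> k; apply: (t_le k.+1)].
Qed.

Definition core_bounds : seq nat := [:: 0; 2; 3; 0; 2; 2; 4; 2; 2; 2]%N.

Definition short_cores : seq (seq int) := Eval vm_compute in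
  map (map int_of_Z) (box_sel (fun y => Z.leb (qcore y) 1) core_bounds [::]).

Lemma short_coresE :
  short_cores = map (map int_of_Z) (box_sel (fun y => Z.leb (qcore y) 1) core_bounds [::]).
Proof. by vm_compute. Qed.

Lemma qcore_rmorph (R S : pzRingType) (f : {rmorphism R -> S}) (y : seq R) :
  f (qcore y) = qcore (map f y).
Proof.
case: y => [|y0 [|y1 [|y2 [|y3 [|y4 [|y5 [|y6 [|y7 [|y8 [|y9 [|? ?]]]]]]]]]]];
  by rewrite /= ?rmorph0 // !(rmorphD, rmorphN, rmorphM).
Qed.

Lemma sq_le_norm (x : int) (b c : nat) : x * x <= c%:Z -> (c < b.+1 * b.+1)%N -> `|x| <= b%:Z.
Proof. by move=> sq_le c_lt; rewrite ler_norml; nia. Qed.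

Lemma core_coord_bound (s : seq int) k : size s = 10%N -> s`_0 = 0 -> s`_3 = 0 ->
  qcore s <= 1 -> `|s`_k| <= (nth 0 core_bounds k)%:Z.
Proof.
move=> size_s s0 s3 q_le1; apply: (sq_le_norm (c := nth 0 core_sq_bounds k)).
  rewrite -expr2 -natz -[_%:R]mulr1; apply: le_trans (core_coord_sq_le k size_s s0 s3) _.
  exact: ler_wpM2l.
by rewrite /core_sq_bounds /core_bounds; case: k => [|[|[|[|[|[|[|[|[|[|k]]]]]]]]]] //=; rewrite !nth_nil.
Qed.

Lemma norm_Z_of_int_le (x : int) (b : nat) :
  `|x| <= b%:Z -> (Z.abs (Z_of_int x) <= Z.of_nat b)%Z.
Proof. lia. Qed.

Lemma core_mem_short (s : seq int) : size s = 10%N -> s`_0 = 0 -> s`_3 = 0 ->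
  qcore s <= 1 -> s \in short_cores.
Proof.
move=> size_s s0 s3 q_le1; rewrite short_coresE -[s](mapK Z_of_intK) map_f //.
apply: (@mem_box_sel _ _ [::]); first by rewrite size_map size_s.
  move=> k; have -> : (map Z_of_int s)`_k = Z_of_int s`_k.
    by case: (ltnP k (size s)) => [lt_k|le_k]; [rewrite (nth_map 0) | rewrite !nth_default ?size_map].
  exact/norm_Z_of_int_le/core_coord_bound.
by rewrite -qcore_rmorph /=; apply/Z.leb_le; lia.
Qed.

Definition PL (t : seq int) : seq int := mulL Plist t.

Definition addL (s t : seq int) : seq int := [seq s`_k + t`_k | k <- iota 0 10].

Definition rankL (t : seq int) : nat := (find (fun j => iter j.+1 PL t == t) (iota 0 6)).+1.

Definition hvecL (t : seq int) : seq int :=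
  foldr (fun j => addL (iter j PL t)) (nseq 10 0) (iota 1 (rankL t)).

Definition qL (t : seq int) : int := dotL t (mulL (tab Eentry) t).

Lemma PhiPow_vec_of j t : PhiPow j (vec_of t) = vec_of (iter j PL t).
Proof. by elim: j => [|j IHj]; rewrite ?PhiPow0 // PhiPowS IHj Phi_Plist mulmx_vec_of. Qed.

Lemma size_iter_PL j t : size t = 10%N -> size (iter j PL t) = 10%N.
Proof. by case: j => [|j] //= _; rewrite size_map. Qed.

Lemma eq_PhiPow_vec_of k t : size t = 10%N ->
  (PhiPow k (vec_of t) == vec_of t) = (iter k PL t == t).
Proof.
move=> size_t; rewrite PhiPow_vec_of; apply/eqP/eqP => [|-> //].
by apply: vec_of_inj; rewrite ?size_iter_PL.
Qed.

Lemma isRank_rankL t : size t = 10%N -> isRank (vec_of t) (rankL t).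
Proof.
move=> size_t; set P := fun j => iter j.+1 PL t == t.
have hasP : has P (iota 0 6).
  by apply/hasP; exists 5%N => //; rewrite /P -eq_PhiPow_vec_of // PhiPow_order6.
have iotaE j : (j < 6)%N -> nth 0%N (iota 0 6) j = j by move=> lt_j; rewrite nth_iota.
rewrite /isRank /rankL -/P; set p := find P _.
have lt_p : (p < 6)%N by rewrite -(size_iota 0 6) -has_find.
have := nth_find 0%N hasP; rewrite -/p iotaE // /P -eq_PhiPow_vec_of // => ->.
apply/forallP => -[[|j] //= lt_j]; rewrite eq_PhiPow_vec_of //.
have lt_jp : (j < p)%N := lt_j.
by have := before_find 0%N lt_jp; rewrite iotaE ?(ltn_trans lt_jp) // /P => ->.
Qed.

Lemma vec_of_addL s t : vec_of (addL s t) = vec_of s + vec_of t.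
Proof. by apply/matrixP => i j; rewrite !mxE (nth_map 0%N) ?size_iota // nth_iota. Qed.

Lemma vec_of_nseq0 : vec_of (nseq 10 0) = 0.
Proof. by apply/matrixP => i j; rewrite !mxE nth_nseq if_same. Qed.

Lemma hvec_vec_of t : hvec (vec_of t) (rankL t) = vec_of (hvecL t).
Proof.
rewrite /hvec /hvecL /index_iota subSS subn0.
elim: (iota 1 _) => [|j js IHjs]; first by rewrite big_nil vec_of_nseq0.
by rewrite big_cons IHjs /= vec_of_addL PhiPow_vec_of.
Qed.

Lemma coords_vec_of s k : (k < 10)%N -> (coords (vec_of s))`_k = s`_k.
Proof. by move=> lt_k; rewrite coordsE // mxE inordK. Qed.

Lemma coords_h_comb X Y : (coords (h_comb X Y))`_0 = X /\ (coords (h_comb X Y))`_3 = Y.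
Proof. by rewrite !coordsE // !mxE !inordK //=; split; ring. Qed.

Lemma h_comb_inj X Y X' Y' : h_comb X Y = h_comb X' Y' -> X = X' /\ Y = Y'.
Proof.
move=> E; have [X0 Y3] := coords_h_comb X Y; have [X0' Y3'] := coords_h_comb X' Y'.
by split; [rewrite -X0 E X0' | rewrite -Y3 E Y3'].
Qed.

Lemma h_comb_add_muln X Y a b (n : nat) :
  h_comb X Y + h_comb a b *+ n = h_comb (X + n%:Z * a) (Y + n%:Z * b).
Proof.
by rewrite -scaler_nat natz /h_comb scalerDr !scalerA addrACA -!scalerDl.
Qed.

Definition hcoef0L (t : seq int) : int := (hvecL t)`_0.
Definition hcoefInfL (t : seq int) : int := (hvecL t)`_3.

Lemma hvec_core t : size t = 10%N ->
  hvec (vec_of t) (rankL t) = h_comb (hcoef0L t) (hcoefInfL t).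
Proof.
move=> size_t; have /and3P[_ /eqP Pt _] := isRank_rankL size_t.
by rewrite (fixed_span (hvec_fixed Pt)) hvec_vec_of !coords_vec_of.
Qed.

Lemma inR_core lam l i t a b : (0 < l)%N -> size t = 10%N ->
  (qform (vec_of t) == 0) || (qform (vec_of t) == 1) ->
  inR lam l i (vec_of t + h_comb a b) <->
  [/\ rankL t = i, hcoef0L t + i%:Z * a = hcoef0 lam l
    & hcoefInfL t + i%:Z * b = hcoefInf lam l].
Proof.
move=> l_gt0 size_t q01; have fix_h := Phi_h_comb a b.
rewrite inR_char // qform_add_fixed // isRank_add_fixed // hvec_add_fixed //.
split=> [[_ rk]|[<- EA EB]].
  move: (isRank_uniq (isRank_rankL size_t) rk) => <-.
  by rewrite hvec_core // h_comb_add_muln => /h_comb_inj[].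
by split=> //; [apply: isRank_rankL | rewrite hvec_core // h_comb_add_muln EA EB].
Qed.

Lemma short_cores_spec :
  all (fun t => [&& size t == 10%N, t`_0 == 0, t`_3 == 0 & qL t == Posz (rankL t != 1%N)])
    short_cores.
Proof. by vm_compute. Qed.

Lemma short_coreP t : t \in short_cores ->
  [/\ size t = 10%N, t`_0 = 0, t`_3 = 0 & qform (vec_of t) = Posz (rankL t != 1%N)].
Proof.
move/(allP short_cores_spec)=> /and4P[/eqP -> /eqP -> /eqP -> /eqP <-].
by rewrite /qform form_vec_of.
Qed.

Lemma core_addK d : d = vec_of (coords (core d)) + h_comb (coords d)`_0 (coords d)`_3.
Proof. by rewrite coordsK subrK. Qed.

Lemma root_core_short d : (qform d == 0) || (qform d == 1) -> coords (core d) \in short_cores.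
Proof.
move=> q01; have [c0 c3] := coords_core d.
have q_le1 : qcore (coords (core d)) <= 1.
  rewrite -qform_core_list ?size_coords // coordsK qform_core.
  by case/orP: q01 => /eqP ->.
exact: core_mem_short (size_coords _) c0 c3 q_le1.
Qed.

Definition root_data (t : seq int) : nat * int * int := (rankL t, hcoef0L t, hcoefInfL t).

Definition in_class (i r s : nat) (c : nat * int * int) : bool :=
  [&& c.1.1 == i, (c.1.2 %% i%:Z)%Z == r%:Z & (c.2 %% i%:Z)%Z == s%:Z].

Lemma class_count_table : let table := map root_data short_cores in
  all (fun i => all (fun r => all (fun s =>
    count (in_class i r s) table == (if (r == 0) && (s == 0) then 0 else i))%N
      (iota 0 i)) (iota 0 i)) [:: 2; 3; 6]%N.
Proof. by vm_compute. Qed.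

Lemma count_in_class i r s : i \in [:: 2; 3; 6]%N -> (r < i)%N -> (s < i)%N ->
  count (in_class i r s \o root_data) short_cores = if (r == 0) && (s == 0) then 0%N else i.
Proof.
move=> Ii lt_r lt_s; rewrite -count_map.
have r_in : r \in iota 0 i by rewrite mem_iota.
have s_in : s \in iota 0 i by rewrite mem_iota.
by move: class_count_table => /allP/(_ i Ii)/allP/(_ r r_in)/allP/(_ s s_in)/eqP.
Qed.

Lemma uniq_short_cores : uniq short_cores.
Proof. by vm_compute. Qed.

Lemma vec_ofK t : size t = 10%N -> coords (vec_of t) = t.
Proof.
move=> size_t; apply: (@eq_from_nth _ 0); rewrite size_coords // => k lt_k.
exact: coords_vec_of.
Qed.

Lemma coordsD d e k : (k < 10)%N -> (coords (d + e))`_k = (coords d)`_k + (coords e)`_k.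
Proof. by move=> lt_k; rewrite !coordsE // mxE. Qed.

Lemma core_lift t a b : size t = 10%N -> t`_0 = 0 -> t`_3 = 0 ->
  core (vec_of t + h_comb a b) = vec_of t.
Proof.
move=> size_t t0 t3; have [ha hb] := coords_h_comb a b.
have c0 : (coords (vec_of t + h_comb a b))`_0 = a by rewrite coordsD // coords_vec_of // ha t0 add0r.
have c3 : (coords (vec_of t + h_comb a b))`_3 = b by rewrite coordsD // coords_vec_of // hb t3 add0r.
by rewrite /core c0 c3 addrK.
Qed.

Lemma qform_root_core d : qform (vec_of (coords (core d))) = qform d.
Proof. by rewrite coordsK qform_core. Qed.

Definition target_class lam l i : pred (seq int) :=
  in_class i `|(hcoef0 lam l %% i%:Z)%Z|%N `|(hcoefInf lam l %% i%:Z)%Z|%N \o root_data.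

Definition lift_core lam l i (t : seq int) : vec :=
  vec_of t + h_comb ((hcoef0 lam l - hcoef0L t) %/ i%:Z)%Z ((hcoefInf lam l - hcoefInfL t) %/ i%:Z)%Z.

Lemma modz_absE (x y : int) (i : nat) : (0 < i)%N ->
  ((x %% i%:Z)%Z == `|(y %% i%:Z)%Z|%N%:Z) = (i%:Z %| y - x)%Z.
Proof.
move=> i_gt0; rewrite gez0_abs ?modz_ge0 ?eqz_nat -?lt0n //.
by rewrite -eqz_mod_dvd eq_sym.
Qed.

Lemma target_classE lam l i t : (0 < i)%N -> target_class lam l i t =
  [&& rankL t == i, (i%:Z %| hcoef0 lam l - hcoef0L t)%Z & (i%:Z %| hcoefInf lam l - hcoefInfL t)%Z].
Proof. by move=> i_gt0; rewrite /target_class /in_class /= !modz_absE. Qed.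

Lemma inR_qform lam l i d : inR lam l i d -> (qform d == 0) || (qform d == 1).
Proof. by case=> /andP[/andP[_ ->]]. Qed.

Lemma inR_target_class lam l i d : (0 < l)%N -> inR lam l i d ->
  let t := coords (core d) in
  [/\ t \in short_cores, target_class lam l i t & d = lift_core lam l i t].
Proof.
move=> l_gt0 Rd /=; have t_in := root_core_short (inR_qform Rd).
have [size_t t0 t3 _] := short_coreP t_in.
have q01 := inR_qform Rd; rewrite -qform_root_core in q01.
move: Rd; rewrite {1}[d]core_addK inR_core // => -[rk EA EB].
have i_gt0 : (0 < i)%N by rewrite -rk.
have i_neq0 : i%:Z != 0 by rewrite eqz_nat -lt0n.
rewrite target_classE // rk eqxx /lift_core -EA -EB.
rewrite !(addrC (hcoef0L _)) !(addrC (hcoefInfL _)) !addrK !mulKz // -core_addK.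
by rewrite !dvdz_mulr.
Qed.

Lemma lift_core_inR lam l i t : (0 < l)%N -> t \in short_cores -> target_class lam l i t ->
  inR lam l i (lift_core lam l i t).
Proof.
move=> l_gt0 t_in cls; have [size_t _ _ qt] := short_coreP t_in.
have /and3P[/eqP rk _ _] := cls.
have i_gt0 : (0 < i)%N by rewrite -rk.
move: cls; rewrite target_classE // => /and3P[_ dvdA dvdB].
rewrite inR_core //; last by rewrite qt; case: (_ != _).
by split=> //; rewrite mulrC divzK // addrC subrK.
Qed.

Lemma rank_set_gt1 i : i \in [:: 2; 3; 6]%N -> (1 < i)%N.
Proof. by rewrite !inE => /or3P[] /eqP->. Qed.

Lemma dvdz_hcoef lam (i l : nat) : (i %| l)%N ->
  (i%:Z %| hcoef0 lam l)%Z /\ (i%:Z %| hcoefInf lam l)%Z.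
Proof.
move=> dvd_il; have dvd_il' : (i%:Z %| l%:Z)%Z by rewrite dvdzE.
by case: lam => [q|] /=; split; rewrite ?dvdz_mulr ?dvdz0.
Qed.

Lemma inR_dvd_empty lam l i d : i \in [:: 2; 3; 6]%N -> (0 < l)%N -> (i %| l)%N ->
  ~ inR lam l i d.
Proof.
move=> Ii l_gt0 dvd_il Rd; have [t_in cls _] := inR_target_class l_gt0 Rd.
have i_gt0 : (0 < i)%N by rewrite ltnW ?rank_set_gt1.
have [/dvdz_mod0P A0 /dvdz_mod0P B0] := dvdz_hcoef lam dvd_il.
have : (0 < count (target_class lam l i) short_cores)%N by rewrite -has_count; apply/hasP; exists (coords (core d)).
by rewrite /target_class A0 B0 count_in_class.
Qed.

Lemma inR_ndvd_roots lam l i : i \in [:: 2; 3; 6]%N -> (0 < l)%N -> ~~ (i %| l)%N ->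
  exists s : seq vec,
    [/\ size s = i, uniq s, all isReal s & forall d, inR lam l i d <-> d \in s].
Proof.
move=> Ii l_gt0 ndvd_il; have i_gt1 := rank_set_gt1 Ii; have i_gt0 := ltnW i_gt1.
set A := hcoef0 lam l; set B := hcoefInf lam l.
have [_ _ gcdAB] := (hcoef_spec lam A B l_gt0).2 (conj erefl erefl).
have res_lt x : (`|(x %% i%:Z)%Z|%N < i)%N.
  by rewrite -ltz_nat gez0_abs ?modz_ge0 ?ltz_pmod // ?eqz_nat -?lt0n.
have res_neq0 : ~~ ((`|(A %% i%:Z)%Z|%N == 0) && (`|(B %% i%:Z)%Z|%N == 0))%N.
  apply: contra ndvd_il; rewrite !absz_eq0 => /andP[/eqP/dvdz_mod0P dvdA /eqP/dvdz_mod0P dvdB].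
  by rewrite -(@dvdzE i l) -gcdAB dvdz_gcd dvdA dvdB.
exists (map (lift_core lam l i) (filter (target_class lam l i) short_cores)); split.
- by rewrite size_map size_filter /target_class count_in_class // (negPf res_neq0).
- rewrite map_inj_in_uniq ?filter_uniq ?uniq_short_cores // => t1 t2.
  rewrite !mem_filter => /andP[_ /short_coreP[s1 t10 t13 _]] /andP[_ /short_coreP[s2 t20 t23 _]].
  by move/(congr1 (coords \o core)); rewrite /= !core_lift // !vec_ofK.
- apply/allP => d /mapP[t]; rewrite mem_filter => /andP[cls t_in] ->.
  have [size_t t0 t3 qt] := short_coreP t_in; have /and3P[/eqP /= rk _ _] := cls.
  have q1 : qform (lift_core lam l i t) = 1.
    by rewrite qform_add_fixed ?Phi_h_comb // qt rk eq_sym (ltn_eqF i_gt1).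
  rewrite /isReal /isRoot q1 eqxx orbT !andbT.
  by apply: contra_eqN q1 => /eqP->; rewrite /qform form0l.
- move=> d; split=> [Rd|/mapP[t]].
    have [t_in cls ->] := inR_target_class l_gt0 Rd.
    by rewrite map_f // mem_filter cls.
  by rewrite mem_filter => /andP[cls t_in] ->; apply: lift_core_inR.
Qed.

Lemma PhiPow_rank_inj d i j k : isRank d i -> (0 < j <= i)%N -> (0 < k <= i)%N ->
  PhiPow j d = PhiPow k d -> j = k.
Proof.
move=> /and3P[_ /eqP Pi /forallP minimal].
wlog lt_jk : j k / (j < k)%N => [hwlog|/andP[j_gt0 _] /andP[_ le_ki] Ejk].
  move=> Hj Hk E; case: (ltngtP j k) => // [lt_jk|lt_kj]; first exact: hwlog.
  by apply/esym/hwlog.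
have lt_n : (i - k + j < i)%N by rewrite -ltn_subRL subKn // ltn_subrL ?j_gt0 /= ?(leq_ltn_trans _ lt_jk).
have := minimal (Ordinal lt_n); rewrite /= addn_gt0 j_gt0 orbT /= PhiPowD Ejk -PhiPowD subnK //.
by rewrite Pi eqxx.
Qed.

Lemma hab_hslope lam (l a : nat) (b : int) : (0 < l)%N ->
  match lam with
  | Some q => (0 < a)%N /\ b%:~R / a%:R = q
  | None => a = 0%N /\ b = l%:Z
  end -> gcdz a%:Z b = l%:Z -> hab a b = hslope lam l.
Proof.
move=> l_gt0 Hab gcd_ab; rewrite /hab /hslope.
suff [<- <-] : a%:Z = hcoef0 lam l /\ b = hcoefInf lam l by [].
apply/(hcoef_spec lam a%:Z b l_gt0); split=> //.
  by case: lam Hab => [q [a_gt0 _]|[-> ->]]; rewrite /pos_pair ?ltz_nat ?a_gt0 // eqxx ltz_nat l_gt0 orbT.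
case: lam Hab => [q [a_gt0 <-]|[-> ->]]; rewrite /slope_pair ?eqxx //.
by rewrite eqz_nat eqn0Ngt a_gt0 pmulrn.
Qed.

Lemma inR_orbit lam l i d : i \in [:: 1; 2; 3; 6]%N -> (0 < l)%N -> inR lam l i d ->
  forall e, inR lam l i e <-> exists2 j : nat, (1 <= j <= i)%N & e = PhiPow j d.
Proof.
move=> Ii l_gt0 Rd e; split; last by case=> j _ ->; apply: inR_PhiPow.
have [_ [_ [rk _]]] := Rd.
have [i1|i_neq1] := eqVneq i 1%N.
  subst i; move=> Re; exists 1%N => //; move: Rd Re; rewrite !inR_rank1 // => -> ->.
  by rewrite PhiPowS PhiPow0 /hslope Phi_h_comb.
have Ii' : i \in [:: 2; 3; 6]%N by move: Ii i_neq1; rewrite !inE => /or4P[] /eqP->.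
have [dvd_il|ndvd_il] := boolP (i %| l)%N; first by case: (inR_dvd_empty Ii' l_gt0 dvd_il Rd).
have [s [size_s _ _ sE]] := inR_ndvd_roots lam Ii' l_gt0 ndvd_il.
have orbit_uniq : uniq [seq PhiPow j d | j <- iota 1 i].
  rewrite map_inj_in_uniq ?iota_uniq // => j k; rewrite !mem_iota !add1n !ltnS.
  exact: PhiPow_rank_inj rk.
have orbit_sub : {subset [seq PhiPow j d | j <- iota 1 i] <= s}.
  by move=> _ /mapP[j _ ->]; rewrite -sE; apply: inR_PhiPow.
have size_le : (size s <= size [seq PhiPow j d | j <- iota 1 i])%N.
  by rewrite size_s size_map size_iota.
have [_ orbitE] := uniq_min_size orbit_uniq orbit_sub size_le.
move=> Re; have : e \in [seq PhiPow j d | j <- iota 1 i] by rewrite orbitE -sE.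
by case/mapP=> j; rewrite mem_iota add1n ltnS => j_le ->; exists j.
Qed.

Theorem mainTheorem15 (lam : option rat) (i l : nat) :
  i \in [:: 1; 2; 3; 6]%N -> (0 < l)%N ->
  (* (a) *)
  (forall d, inR lam l i d ->
     forall e, inR lam l i e <-> exists2 j : nat, (1 <= j <= i)%N & e = PhiPow j d) /\
  (* (b) *)
  ((1 < i)%N -> (i %| l)%N -> forall d, ~ inR lam l i d) /\
  (* (c) *)
  ((1 < i)%N -> ~~ (i %| l)%N ->
     exists s : seq vec,
       [/\ size s = i, uniq s, all isReal s & forall d, inR lam l i d <-> d \in s]) /\
  (* (d) *)
  (forall (a : nat) (b : int),
     match lam with
     | Some q => (0 < a)%N /\ b%:~R / a%:R = q
     | None => a = 0%N /\ b = l%:Z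
     end ->
     gcdz a%:Z b = l%:Z ->
     forall d, inR lam l 1 d <-> d = hab a b).
Proof.
move=> Ii l_gt0.
have Ii' : (1 < i)%N -> i \in [:: 2; 3; 6]%N by move: Ii; rewrite !inE => /or4P[] /eqP->.
split; first by move=> d Rd; apply: inR_orbit.
split; first by move=> /Ii' Ii2 dvd_il d; apply: inR_dvd_empty.
split; first by move=> /Ii' Ii2; apply: inR_ndvd_roots.
by move=> a b Hab gcd_ab d; rewrite inR_rank1 // (hab_hslope l_gt0 Hab gcd_ab).
Qed.
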